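(* Let $D$ be a digraph with at least two vertices and $s\in V(D)$ such that every vertex of $D$ is reachable from $s$, and let $B_s$ be the diblock of $s$ in $D$. Let $T$ be an out-tree in $D$ (a subgraph of $D$) whose root $r$ lies in $B_s$ and which has $\ell$ leaves. Then $D$ contains an out-tree rooted at $s$ with at least $(\ell-1)/2$ leaves.
   Context: Digraphs are finite and without loops; paths are directed. An out-tree is an oriented tree with exactly one vertex of in-degree zero (its root); its leaves are its vertices of out-degree zero. A vertex $v$ is bi-reachable from $r$ if there are two internally vertex-disjoint directed paths from $r$ to $v$. For a digraph $H$ with at least two vertices and $r\in V(H)$ such that every vertex of $H$ is reachable from $r$, the diblock $B_r$ of $r$ in $H$ is the set of all vertices bi-reachable from $r$, together with $r$ and all out-neighbours of $r$. *)

From mathcomp Require Import all_boot.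
Set Implicit Arguments. Unset Strict Implicit. Unset Printing Implicit Defensive.

Section Digraphs.
Variable V : finType.
Variable E : rel V.

(* A directed path in D from x, given as the sequence of the vertices after x
   (mathcomp convention), visiting no vertex twice. *)
Definition dpath (x y : V) (p : seq V) : bool :=
  [&& path E x p, last x p == y & uniq (x :: p)].

(* The internal vertices of the path x :: p (all but the two endpoints). *)
Definition interior (p : seq V) : seq V := take (size p).-1 p.

Definition bireachable (r v : V) : Prop :=
  exists p1 p2 : seq V,
    [/\ dpath r v p1, dpath r v p2 &
        [disjoint (interior p1) & (interior p2)]].

Definition in_diblock (r v : V) : Prop :=
  bireachable r v \/ v = r \/ E r v.

Definition undir (A : {set V * V}) : rel V :=
  fun x y => ((x, y) \in A) || ((y, x) \in A).

(* (S, A) is an out-tree in D rooted at r: a subgraph of D (arcs of A are arcs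
   of D with both ends in S), which is an oriented tree (no pair of opposite
   arcs, underlying graph connected with |A| = |S| - 1), and r is the unique
   vertex of S of in-degree zero. *)
Definition is_outtree (S : {set V}) (A : {set V * V}) (r : V) : Prop :=
  (forall a, a \in A -> [&& E a.1 a.2, a.1 \in S & a.2 \in S]) /\
  [/\ forall x y, (x, y) \in A -> (y, x) \notin A,
      r \in S,
      forall x, x \in S -> connect (undir A) r x,
      #|A| + 1 = #|S| &
      forall x, x \in S -> ((forall y, (y, x) \notin A) <-> x = r)].

Definition leaves (S : {set V}) (A : {set V * V}) : {set V} :=
  [set x in S | [forall y, (x, y) \notin A]].

End Digraphs.

From mathcomp Require Import all_boot.
From mathcomp Require Import zify.

Set Implicit Arguments. Unset Strict Implicit. Unset Printing Implicit Defensive.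

(* Prepending an arc x -> y to an out-tree rooted at y gives an out-tree rooted
   at x that keeps every old leaf except possibly x itself.  Doing this along a
   path p from s to r turns T into an out-tree rooted at s that loses only the
   leaves of T lying on p.  If r is bi-reachable from s, the two internally
   disjoint s-r paths share only s, so together they meet at most #|leaves T| + 1
   leaves and one of them loses at most half of them; otherwise r = s or r is an
   out-neighbour of s, and a path with at most one arc loses at most one leaf. *)

Lemma connect_invariant (T : finType) (e : rel T) (P : pred T) x y :
  (forall u v, P u -> e u v -> P v) -> P x -> connect e x y -> P y.
Proof.
move=> closedP + /connectP[p + ->].
by elim: p x => //= z p IHp x Px /andP[exz pz]; exact: IHp (closedP _ _ Px exz) pz.
Qed.

Lemma mem_belast_interior (V : finType) (x z : V) p :
  z \in belast x p -> (z == x) || (z \in interior p).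
Proof.
case: p => [|y q] //=; rewrite inE => /orP[-> //|zq]; apply/orP; right.
suff -> : interior (y :: q) = belast y q by [].
by rewrite /interior /=; elim: q y {zq} => [|w q IHq] y //=; rewrite IHq.
Qed.

Section OutTrees.
Variable V : finType.
Variable E : rel V.

Definition arc_rel (A : {set V * V}) : rel V := fun u v => (u, v) \in A.

Definition parent_tree (S : {set V}) (A : {set V * V}) (r : V) : Prop :=
  exists par : V -> V,
  [/\ A = [set (par z, z) | z in S :\ r], r \in S,
      forall z, z \in S :\ r -> (par z \in S) && E (par z) z &
      forall z, z \in S -> connect (arc_rel A) r z].

Lemma mem_parent_arcs (par : V -> V) (D : {set V}) u v :
  ((u, v) \in [set (par z, z) | z in D]) = (v \in D) && (u == par v).
Proof.
apply/imsetP/andP => [[z zD [-> ->]] | [vD /eqP ->]]; first by split.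
by exists v.
Qed.

Lemma parent_tree_outtree S A r : parent_tree S A r -> is_outtree E S A r.
Proof.
case=> par [-> rS parP reach]; split.
  move=> [u v] /=; rewrite mem_parent_arcs => /andP[vD /eqP ->].
  have /andP[pS ->] := parP _ vD; rewrite pS.
  by move: vD; rewrite in_setD1 => /andP[_ ->].
split=> //.
- (* if par x = y and par y = x, no arc enters {x, y}, so r cannot reach x *)
  move=> x y; rewrite !mem_parent_arcs => /andP[yD /eqP ex].
  apply/negP => /andP[xD /eqP ey].
  have xS : x \in S by move: xD; rewrite !inE => /andP[].
  suff : (x != x) && (x != y) by rewrite eqxx.
  apply: (connect_invariant (P := fun z => (z != x) && (z != y))) (reach x xS).
    move=> u v /andP[ux uy]; rewrite /arc_rel mem_parent_arcs => /andP[_ /eqP eu].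
    by subst u; apply/andP; split; apply/eqP => evx; subst v;
      [rewrite -ey eqxx in uy | rewrite -ex eqxx in ux].
  by move: xD yD; rewrite !inE => /andP[xr _] /andP[yr _]; rewrite !(eq_sym r) xr yr.
- move=> x xS; apply: connect_sub (reach x xS) => u v uv.
  by apply: connect1; rewrite /undir [_ \in _]uv.
- rewrite card_imset; last by move=> a b [].
  by rewrite [RHS](cardsD1 r) rS add1n addn1.
- move=> x xS; split=> [noin | -> y]; last by rewrite mem_parent_arcs !inE eqxx.
  apply/eqP; apply: contraT => xr.
  by move: (noin (par x)); rewrite mem_parent_arcs !inE xr xS eqxx.
Qed.

Lemma outtree_parent_tree S A r : is_outtree E S A r -> parent_tree S A r.
Proof.
case=> arcs [_ rS conn card root].
pose par x := odflt x [pick w | (w, x) \in A].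
have parA x : x \in S :\ r -> (par x, x) \in A.
  rewrite !inE => /andP[xr xS]; rewrite /par; case: pickP => [w //|noin].
  by case/eqP: xr; apply: (root x xS).1 => y; rewrite noin.
have eA : A = [set (par z, z) | z in S :\ r].
  apply/eqP; rewrite eq_sym eqEcard; apply/andP; split.
    by apply/subsetP => a /imsetP[z zD ->]; exact: parA.
  rewrite card_imset; last by move=> a b [].
  by move: card; rewrite (cardsD1 r S) rS add1n addn1 => -[->].
exists par; split=> // [x /parA /arcs /and3P[-> -> _] // | x xS].
(* undirected reachability becomes directed: an arc used backwards is the
   last arc of the tree path to its head *)
apply: (connect_invariant (P := connect (arc_rel A) r) _ (connect0 _ _) (conn x xS)).
move=> u v ru /orP[uv | vu].
  exact: connect_trans ru (connect1 uv).
move: vu; rewrite eA mem_parent_arcs => /andP[uD /eqP ->].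
have ur : u != r by move: uD; rewrite !inE => /andP[].
case/connectP: ru => p + eu; case/lastP: p eu => [/= eu|q w].
  by rewrite eu eqxx in ur.
rewrite rcons_path last_rcons => eu /andP[rq]; subst w.
rewrite /arc_rel eA mem_parent_arcs => /andP[_ /eqP <-].
by apply/connectP; exists q; rewrite -?eA.
Qed.

Hypothesis Eirr : irreflexive E.

Lemma parent_tree_graft_arc S A x y :
  E x y -> parent_tree S A y ->
  exists S' A', parent_tree S' A' x /\ leaves S A :\ x \subset leaves S' A'.
Proof.
move=> exy [par [eA yS parP reach]].
have xy : x != y by apply: contraTneq exy => ->; rewrite Eirr.
pose par' z := if z == y then x else par z.
pose A' := [set (par' z, z) | z in (x |: S) :\ x].
have yD : y \in (x |: S) :\ x by rewrite !inE eq_sym xy yS orbT.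
exists (x |: S), A'; split.
  exists par'; split=> //; first by rewrite !inE eqxx.
    move=> z; rewrite !inE => /andP[zx /orP[/eqP zx' | zS]]; first by rewrite zx' eqxx in zx.
    rewrite /par'; case: (z =P y) => [->|/eqP zy]; first by rewrite eqxx /= exy.
    have zD : z \in S :\ y by rewrite !inE zy zS.
    by have /andP[-> ->] := parP z zD; rewrite orbT.
  move=> z; rewrite !inE => /orP[/eqP -> | zS]; first exact: connect0.
  apply: (connect_invariant (P := connect (arc_rel A') x)) (reach z zS).
    move=> u v xu; rewrite /arc_rel eA mem_parent_arcs => /andP[vD /eqP eu]; subst u.
    have [->|vx] := eqVneq v x; first exact: connect0.
    apply: connect_trans xu (connect1 _); move: vD; rewrite !inE => /andP[vy vS].
    by rewrite /arc_rel mem_parent_arcs !inE vx vS orbT /par' (negbTE vy) eqxx.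
  by apply: connect1; rewrite /arc_rel mem_parent_arcs yD /par' !eqxx.
apply/subsetP => z; rewrite !inE => /andP[zx /andP[zS /forallP leafz]].
rewrite zS orbT /=; apply/forallP => w; rewrite mem_parent_arcs !inE.
apply/negP => /andP[/andP[wx wS'] /eqP]; rewrite /par'.
case: eqP => [_ /eqP | /eqP wy zp]; first by rewrite (negbTE zx).
have wS : w \in S by move: wS'; rewrite (negbTE wx).
by move: (leafz w); rewrite eA mem_parent_arcs !inE wS wy zp eqxx.
Qed.

Lemma parent_tree_graft_path p x S A :
  path E x p -> parent_tree S A (last x p) ->
  exists S' A', parent_tree S' A' x /\
    leaves S A :\: [set z in belast x p] \subset leaves S' A'.
Proof.
elim: p x S A => [|y p IHp] x S A /=.
  by move=> _ tree; exists S, A; split=> //; exact: subsetDl.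
move=> /andP[exy yp] tree.
have [S1 [A1 [tree1 sub1]]] := IHp y S A yp tree.
have [S2 [A2 [tree2 sub2]]] := parent_tree_graft_arc exy tree1.
exists S2, A2; split=> //; apply/subsetP => z /setDP[zL].
rewrite [_ \in _]inE /= inE negb_or => /andP[zx zp].
apply: (subsetP sub2); apply/setD1P; split=> //.
by apply: (subsetP sub1); apply/setDP; rewrite inE.
Qed.

Lemma outtree_reroot_path S A s p :
  path E s p -> is_outtree E S A (last s p) ->
  exists S' A', is_outtree E S' A' s /\
    #|leaves S A| <= #|leaves S' A'| + #|leaves S A :&: [set z in belast s p]|.
Proof.
move=> sp /outtree_parent_tree tree.
have [S' [A' [tree' sub]]] := parent_tree_graft_path sp tree.
exists S', A'; split; first exact: parent_tree_outtree.
rewrite -(cardsID [set z in belast s p] (leaves S A)) addnC leq_add2r.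
exact: subset_leq_card.
Qed.

End OutTrees.

Lemma card_setI_belast_size (V : finType) (L : {set V}) (s : V) (p : seq V) :
  #|L :&: [set z in belast s p]| <= size p.
Proof.
apply: leq_trans (subset_leq_card (subsetIr _ _)) _.
by rewrite cardsE (leq_trans (card_size _)) ?size_belast.
Qed.

Lemma card_setI_belast_disjoint (V : finType) (L : {set V}) (s : V) (p1 p2 : seq V) :
  [disjoint interior p1 & interior p2] ->
  #|L :&: [set z in belast s p1]| + #|L :&: [set z in belast s p2]| <= #|L| + 1.
Proof.
move=> disj; rewrite -cardsUI; apply: leq_add.
  by apply: subset_leq_card; rewrite subUset !subsetIl.
rewrite -(cards1 s); apply: subset_leq_card; apply/subsetP => z.
rewrite !inE => /andP[/andP[_ /mem_belast_interior z1] /andP[_ /mem_belast_interior z2]].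
apply: contraT => zs; move: z1 z2; rewrite (negbTE zs) /= => z1.
by rewrite (disjointFr disj z1).
Qed.

Theorem lemma4 (V : finType) (E : rel V) (Eirr : irreflexive E)
    (hV : 1 < #|V|) (s : V) (hreach : forall v, connect E s v)
    (T : {set V}) (AT : {set V * V}) (r : V)
    (hT : is_outtree E T AT r) (hr : in_diblock E s r) :
  exists (S : {set V}) (A : {set V * V}),
    is_outtree E S A s /\
    #|leaves T AT| <= 2 * #|leaves S A| + 1.
Proof.
have reroot p : dpath E s r p -> exists S A, is_outtree E S A s /\
    #|leaves T AT| <= #|leaves S A| + #|leaves T AT :&: [set z in belast s p]|.
  by case/and3P=> sp /eqP sr _; apply: outtree_reroot_path; rewrite ?sr.
have short p : size p <= 1 -> dpath E s r p -> exists S A,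
    is_outtree E S A s /\ #|leaves T AT| <= 2 * #|leaves S A| + 1.
  move=> p1 /reroot[S [A [tree bnd]]]; exists S, A; split=> //.
  have := card_setI_belast_size (leaves T AT) s p; lia.
case: hr => [[p1 [p2 [d1 d2 disj]]] | [rs | esr]].
- have [S1 [A1 [tree1 bnd1]]] := reroot p1 d1.
  have [S2 [A2 [tree2 bnd2]]] := reroot p2 d2.
  have := card_setI_belast_disjoint (leaves T AT) s disj.
  case: (leqP #|leaves T AT :&: [set z in belast s p1]|
              #|leaves T AT :&: [set z in belast s p2]|) => cmp bnd.
    by exists S1, A1; split=> //; lia.
  by exists S2, A2; split=> //; lia.
- by subst r; apply: (short [::]) => //; rewrite /dpath /= eqxx.
- apply: (short [:: r]) => //; rewrite /dpath /= esr eqxx inE.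
  by apply/and4P; split=> //; apply/eqP => sr; move: esr; rewrite sr Eirr.
Qed.
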